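(* Let $p$ be a prime and $n$ a positive integer. Let $m\ge1$, let $k_1,\ldots,k_m$ be positive integers with $k_i\le n$, and let $r_1<r_2<\cdots<r_m$ be positive integers such that $$\lfloor n/p^{r_i}\rfloor-\lfloor k_i/p^{r_i}\rfloor-\lfloor (n-k_i)/p^{r_i}\rfloor=1\quad\text{for } i=1,\ldots,m.$$ Then there exists a single positive integer $k\le n$ such that $$\lfloor n/p^{r_i}\rfloor-\lfloor k/p^{r_i}\rfloor-\lfloor (n-k)/p^{r_i}\rfloor=1\quad\text{for all } i=1,\ldots,m.$$ *)

From mathcomp Require Import all_boot.
Set Implicit Arguments. Unset Strict Implicit. Unset Printing Implicit Defensive.

(* carry_term p n k r := floor(n/p^r) - floor(k/p^r) - floor((n-k)/p^r),
   computed in int to avoid truncated subtraction issues (k <= n in uses). *)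
From mathcomp Require Import all_algebra.
Definition carry_term (p n k r : nat) : int :=
  ((n %/ p ^ r)%:Z - (k %/ p ^ r)%:Z - ((n - k) %/ p ^ r)%:Z)%R.

(* The carry term  floor(n/q) - floor(k/q) - floor((n-k)/q),  for q = p^r and
   k <= n, is the carry produced in position r when adding k and n - k in
   base p: it is 1 exactly when  n mod q < k mod q,  and 0 otherwise
   ([carry_termE]).  The hypothesis at the largest exponent R = max_i r_i
   forces p^R <= n ([modulus_le_of_carry]).  The single witness
   kk = p^R - 1 then works for every i: since p^(r_i) divides p^R, we get
   kk mod p^(r_i) = p^(r_i) - 1, the largest possible residue, which exceeds
   n mod p^(r_i) because the given k_i already does ([carry_pred_multiple]). *)
From mathcomp Require Import all_boot all_algebra ring.
Import GRing.Theory.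

Lemma carry_termE (p n k r : nat) : 0 < p -> k <= n ->
  carry_term p n k r = Posz (n %% p ^ r < k %% p ^ r).
Proof.
move=> p_gt0 le_kn; have q_gt0 : 0 < p ^ r by rewrite expn_gt0 p_gt0.
have split_n : n %/ p ^ r = (n - k) %/ p ^ r + k %/ p ^ r
                            + (n %% p ^ r < k %% p ^ r).
  by rewrite -{1 3}(subnK le_kn) divnD // leqDmod.
by rewrite /carry_term split_n !PoszD; ring.
Qed.

Lemma carry_term_eq1 {p n k r : nat} : 0 < p -> k <= n ->
  carry_term p n k r = 1%R <-> n %% p ^ r < k %% p ^ r.
Proof. by move=> p_gt0 le_kn; rewrite carry_termE //; case: ltnP. Qed.

(* A carry modulo q for some k <= n is only possible when q <= n:
   otherwise n mod q = n >= k >= k mod q. *)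
Lemma modulus_le_of_carry {q n k : nat} :
  k <= n -> n %% q < k %% q -> q <= n.
Proof.
move=> le_kn carry; rewrite leqNgt; apply/negP => lt_nq; move: carry.
by rewrite modn_small // ltnNge (leq_trans (leq_mod k q)).
Qed.

(* If d > 1 divides c > 0, then c - 1 has the maximal residue d - 1 modulo d,
   so it produces a carry modulo d whenever some k does. *)
Lemma carry_pred_multiple (c d n k : nat) : 1 < d -> 0 < c -> d %| c ->
  n %% d < k %% d -> n %% d < c.-1 %% d.
Proof.
move=> d_gt1 c_gt0 dvd_dc lt_nk.
rewrite modn_pred ?dvd_dc //; last by rewrite neq_ltn d_gt1 orbT.
rewrite -ltnS prednK ?(ltnW d_gt1) //.
exact: leq_ltn_trans lt_nk (ltn_pmod k (ltnW d_gt1)).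
Qed.

Theorem mainTheorem7 (p n m : nat) (k r : 'I_m -> nat) :
  prime p -> 0 < n -> 1 <= m ->
  (forall i, 0 < k i /\ k i <= n) ->
  (forall i j : 'I_m, (i < j)%N -> (r i < r j)%N) ->
  (forall i, 0 < r i) ->
  (forall i, carry_term p n (k i) (r i) = 1%R) ->
  exists kk : nat, 0 < kk /\ kk <= n /\
    (forall i, carry_term p n kk (r i) = 1%R).
Proof.
move=> p_prime _ m_gt0 k_range _ r_gt0 carry_k.
have p_gt1 := prime_gt1 p_prime; have p_gt0 := ltnW p_gt1.
have carry_mod i : n %% p ^ r i < k i %% p ^ r i.
  exact/(carry_term_eq1 p_gt0 (proj2 (k_range i)))/carry_k.
have [i0 max_r] : {i0 | \max_i r i = r i0} by apply: eq_bigmax; rewrite card_ord.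
set R := \max_i r i in max_r.
have powR_gt1 : 1 < p ^ R by rewrite max_r -{1}(expn0 p) ltn_exp2l.
have powR_le_n : p ^ R <= n.
  by rewrite max_r (modulus_le_of_carry (proj2 (k_range i0)) (carry_mod i0)).
exists (p ^ R).-1; split; first by rewrite -ltnS prednK // ltnW.
split; first exact: leq_trans (leq_pred _) powR_le_n.
move=> i; apply/(carry_term_eq1 p_gt0 (leq_trans (leq_pred _) powR_le_n)).
apply: carry_pred_multiple (carry_mod i).
- by rewrite -{1}(expn0 p) ltn_exp2l.
- exact: ltnW powR_gt1.
- exact/dvdn_exp2l/leq_bigmax.
Qed.
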